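(* Let $p(x)\in\mathbb{F}_3[x]$ be a monic irreducible polynomial of degree $3$ with non-zero trace, let $k\ge 1$, $n=3k$, and let $A\in\mathbb{M}_n(\mathbb{F}_3)$ be similar to the block-diagonal direct sum of $k$ copies of the companion matrix of $p(x)$. Then there is no $M\in\mathbb{M}_n(\mathbb{F}_3)$ with $M^2=0$ such that $A+M$ is diagonalizable over $\mathbb{F}_3$.
   Context: A matrix $X\in\mathbb{M}_n(\mathbb{F}_3)$ is diagonalizable if there is an invertible $U\in\mathbb{M}_n(\mathbb{F}_3)$ with $U^{-1}XU$ diagonal (equivalently, $X^3=X$). The trace of a monic polynomial $x^3+a_2x^2+a_1x+a_0$ is $-a_2$, i.e. the trace of its companion matrix. *)

From mathcomp Require Import all_boot all_order all_algebra.

From mathcomp Require Import all_boot all_order all_algebra.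
From mathcomp Require Import zify ring.

(* Let D = A + M, so that D^3 = D, and let U be a row basis of M; since M^2 = 0
   its rank r is at most n/2.  Multiplying D^3 = D by U on the left kills every
   term starting with M, and the cubic relation of A, whose x^2-coefficient (minus
   the trace) is nonzero, then gives U A^2 = C (U A) + B U for r x r matrices C, B.
   The 2r rows of U and U A span the rows of the invertible matrix A^3 - A (p has
   no root), so they form a basis.  Comparing coefficients of U A^3 computed in
   two ways yields C^3 = C and a quadratic relation in C; an eigenvalue of C is a
   root of that quadratic, which over F_3 is impossible for p irreducible with
   nonzero trace. *)

Set Implicit Arguments.
Unset Strict Implicit.
Unset Printing Implicit Defensive.

Import GRing.Theory.
Local Open Scope ring_scope.

Section CubicMx.
Variables (F : fieldType) (c2 c1 c0 : F).

Definition cubic_mx n (X : 'M[F]_n) :=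
  X *m X *m X + c2 *: (X *m X) + c1 *: X + c0%:M.

Lemma cubic_mx_similar n (P X Y : 'M[F]_n) :
  P *m X = Y *m P -> P *m cubic_mx X = cubic_mx Y *m P.
Proof.
move=> PX; have PXX : P *m (X *m X) = Y *m Y *m P by rewrite mulmxA PX -!mulmxA PX.
rewrite !mulmxDr !mulmxDl -!scalemxAr -!scalemxAl mul_mx_scalar mul_scalar_mx.
by rewrite [P *m (_ *m X)]mulmxA PXX -!mulmxA PX.
Qed.

Lemma cubic_mx_mxdiag_mxcol k (p_ : 'I_k -> nat) m (B_ : forall i, 'M[F]_(p_ i))
    (Y_ : forall i, 'M[F]_(p_ i, m)) :
  cubic_mx (\mxdiag_i B_ i) *m \mxcol_i Y_ i = \mxcol_i (cubic_mx (B_ i) *m Y_ i).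
Proof.
have scale_mxcol a (Z_ : forall i, 'M[F]_(p_ i, m)) :
    a *: \mxcol_i Z_ i = \mxcol_i (a *: Z_ i).
  rewrite -mul_scalar_mx -mxdiagZ mul_mxdiag_mxcol.
  by apply: eq_mxcol => i; rewrite mul_scalar_mx.
rewrite !mulmxDl -!scalemxAl mul_scalar_mx -!mulmxA !mul_mxdiag_mxcol !scale_mxcol.
rewrite -!mxcolD; apply: eq_mxcol => i.
by rewrite !mulmxDl -!scalemxAl !mulmxA mul_scalar_mx.
Qed.

Lemma cubic_mx_mxdiag k (p_ : 'I_k -> nat) (B_ : forall i, 'M[F]_(p_ i)) :
  (forall i, cubic_mx (B_ i) = 0) -> cubic_mx (\mxdiag_i B_ i) = 0.
Proof.
move=> B0; rewrite -[LHS]mulmx1 -[1%:M]submxcolK cubic_mx_mxdiag_mxcol.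
by rewrite -[RHS](mxcol0 _); apply: eq_mxcol => i; rewrite B0 mul0mx.
Qed.

Lemma cubic_mx_eigen n (X : 'M[F]_n) (v : 'rV_n) a :
  v *m X = a *: v -> v *m cubic_mx X = (a ^+ 3 + c2 * a ^+ 2 + c1 * a + c0) *: v.
Proof.
move=> vX; rewrite !mulmxDr -!scalemxAr !mulmxA !vX -!scalemxAl !vX mul_mx_scalar.
by rewrite -scalemxAl vX !scalerA !scalerDl -expr2 -exprSr.
Qed.

Lemma cubic_mx_eigenvalue n (X : 'M[F]_n) a :
  cubic_mx X = 0 -> eigenvalue X a ->
  a ^+ 3 + c2 * a ^+ 2 + c1 * a + c0 = 0.
Proof.
move=> X0 /eigenvalueP[v /cubic_mx_eigen vX nz_v].
move: vX; rewrite X0 mulmx0 => /esym/eqP.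
by rewrite scalemx_eq0 (negPf nz_v) orbF => /eqP.
Qed.

Lemma diagonalizable_cubic_mx n (D : 'M[F]_n) :
  (forall x : F, x ^+ 3 + c2 * x ^+ 2 + c1 * x + c0 = 0) ->
  diagonalizable D -> cubic_mx D = 0.
Proof.
move=> cubic0 [P Pu /similar_diagPex[d /(similarP Pu) PD]].
have dcubic0 : cubic_mx (diag_mx d) = 0.
  apply/matrixP => i j; rewrite /cubic_mx !mul_mx_diag !mxE.
  have [<-|_] := eqVneq i j; last by rewrite !mulr0n !(mul0r, mulr0, addr0).
  by rewrite !mulr1n -[RHS](cubic0 (d 0 i)) -!mulrA -expr2 -exprS.
by rewrite -(mulKmx Pu (cubic_mx D)) (cubic_mx_similar PD) dcubic0 mul0mx mulmx0.
Qed.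

End CubicMx.

Section CubeSub.
Variable F : fieldType.

Lemma unitmx_sub_scalar n (X : 'M[F]_n) a :
  (X - a%:M \in unitmx) = ~~ eigenvalue X a.
Proof. by rewrite /eigenvalue /eigenspace negbK kermx_eq0 row_free_unit. Qed.

Lemma cube_sub_factor n (X : 'M[F]_n) :
  X *m X *m X - X = (X - 0%:M) *m (X - 1%:M) *m (X - (-1)%:M).
Proof.
rewrite raddf0 raddfN opprK subr0 mulmxBr mulmx1 -mulmxA mulmxDr mulmx1.
by rewrite mulmxBl addrA subrK mulmxA.
Qed.

Lemma cube_sub_unitmx n (X : 'M[F]_n) :
  ~~ eigenvalue X 0 -> ~~ eigenvalue X 1 -> ~~ eigenvalue X (-1) ->
  X *m X *m X - X \in unitmx.
Proof. by rewrite cube_sub_factor !unitmx_mul -!unitmx_sub_scalar => -> -> ->. Qed.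

Lemma cube_id_eigenvalue n (X : 'M[F]_n) :
  (0 < n)%N -> X *m X *m X = X -> exists a, eigenvalue X a.
Proof.
move=> n_gt0 X3.
have [e0|ne0] := boolP (eigenvalue X 0); first by exists 0.
have [e1|ne1] := boolP (eigenvalue X 1); first by exists 1.
have [em1|nem1] := boolP (eigenvalue X (-1)); first by exists (-1).
have := cube_sub_unitmx ne0 ne1 nem1; rewrite X3 subrr -row_free_unit /row_free.
by rewrite mxrank0 eq_sym (gtn_eqF n_gt0).
Qed.

Lemma cubic_mx_cube_sub_unitmx (c2 c1 c0 : F) n (X : 'M[F]_n) :
  cubic_mx c2 c1 c0 X = 0 ->
  (forall x, x ^+ 3 + c2 * x ^+ 2 + c1 * x + c0 != 0) ->
  X *m X *m X - X \in unitmx.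
Proof.
move=> X0 noroot; apply: cube_sub_unitmx; apply/negP.
all: by move/(cubic_mx_eigenvalue X0)/eqP; apply/negP.
Qed.

End CubeSub.

Lemma rank_sqr0 (F : fieldType) n (M : 'M[F]_n) :
  M *m M = 0 -> (\rank M + \rank M <= n)%N.
Proof.
move=> M2; have /mxrankS : (M <= kermx M)%MS by apply/sub_kermxP.
by rewrite mxrank_ker; have := rank_leq_col M; lia.
Qed.

Section SquareZeroPerturbation.
Variables (F : fieldType) (n : nat) (A M : 'M[F]_n).
Hypotheses (sqrM0 : M *m M = 0)
  (cubeD : (A + M) *m (A + M) *m (A + M) = A + M).

Lemma cube_add_sqr0 :
  A *m A *m A + A *m A *m M + A *m M *m A + M *m A *m A + M *m A *m M = A + M.
Proof.
rewrite -[RHS]cubeD !(mulmxDl, mulmxDr) sqrM0 !(mul0mx, mulmx0, addr0).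
rewrite -[A *m M *m M]mulmxA sqrM0 mulmx0 addr0.
by rewrite [LHS](ACl (1*3*4*(2*5)))%AC.
Qed.

Local Notation U := (row_base M).

Lemma mulmx_sub_row_base m (X : 'M[F]_(m, n)) : (X *m M <= U)%MS.
Proof. by rewrite eq_row_base submxMl. Qed.

Lemma row_base_sqr0 : U *m M = 0.
Proof.
have UM : (U <= M)%MS by rewrite eq_row_base.
by rewrite -(mulmxKpV UM) -mulmxA sqrM0 mulmx0.
Qed.

Let Phi := U *m A *m M *m pinvmx U.
Let Psi := U *m A *m A *m M *m pinvmx U.

Lemma row_base_AM : U *m A *m M = Phi *m U.
Proof. by rewrite mulmxKpV ?mulmx_sub_row_base. Qed.

Lemma row_base_AAM : U *m A *m A *m M = Psi *m U.
Proof. by rewrite mulmxKpV ?mulmx_sub_row_base. Qed.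

Lemma row_base_cube : U *m A *m A *m A = U *m A - Psi *m U - Phi *m (U *m A).
Proof.
have E := congr1 (mulmx U) cube_add_sqr0.
rewrite !mulmxDr !mulmxA row_base_sqr0 !mul0mx !addr0 in E.
rewrite row_base_AAM row_base_AM -[Phi *m U *m A]mulmxA in E.
by apply/eqP; rewrite eq_sym !subr_eq -{1}E addrAC.
Qed.

Variables (c2 c1 c0 : F).
Hypotheses (cubicA : cubic_mx c2 c1 c0 A = 0) (c2_neq0 : c2 != 0).

Let C := c2^-1 *: (Phi - (1 + c1)%:M).
Let B := c2^-1 *: (Psi - c0%:M).

Lemma row_base_AA : U *m A *m A = C *m (U *m A) + B *m U.
Proof.
apply: (scalerI c2_neq0); rewrite scalerDr /C /B -!scalemxAl !scalerA.
rewrite divff // !scale1r !mulmxBl !mul_scalar_mx.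
have E := congr1 (mulmx U) cubicA.
rewrite /cubic_mx !mulmxDr !mulmxA -!scalemxAr mul_mx_scalar mulmx0 in E.
rewrite [U *m (A *m A)]mulmxA row_base_cube in E.
apply/eqP; rewrite -subr_eq0 -E scalerDl scale1r !opprD !opprK; apply/eqP.
by rewrite !addrA [LHS](ACl (3*5*2*1*4*6))%AC.
Qed.

Lemma Psi_eq : Psi = C *m Phi.
Proof.
have Ufree : row_free U by exact: row_base_free.
apply: (row_free_inj Ufree); rewrite -row_base_AAM row_base_AA mulmxDl.
rewrite -[B *m U *m M]mulmxA row_base_sqr0 mulmx0 addr0.
by rewrite -[C *m _ *m M]mulmxA row_base_AM mulmxA.
Qed.

Lemma row_base_cube_coef :
  (C *m C + B + Phi - 1%:M) *m (U *m A) + (C *m B + Psi) *m U = 0.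
Proof.
have UA3 : U *m A *m A *m A = (C *m C + B) *m (U *m A) + (C *m B) *m U.
  rewrite row_base_AA !mulmxDl -[C *m _ *m A]mulmxA row_base_AA mulmxDr.
  rewrite [C *m (C *m _)]mulmxA [C *m (B *m _)]mulmxA -[B *m U *m A]mulmxA.
  by rewrite addrAC.
apply/eqP; rewrite -(subrr (U *m A *m A *m A)) {1}UA3 row_base_cube.
rewrite !mulmxDl mulNmx mul1mx !opprB !addrA; apply/eqP.
by rewrite [LHS](ACl (1*2*5*3*6*4))%AC.
Qed.

Lemma cube_sub_eq : A *m A *m A - A =
  M - (A *m A *m M + A *m M *m A + M *m A *m A + M *m A *m M).
Proof.
apply/eqP; rewrite -subr_eq0 -(subrr (A + M)) -{1}cube_add_sqr0.
rewrite opprB opprD !addrA; apply/eqP.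
by rewrite [LHS](ACl (1*3*4*5*6*2*7))%AC.
Qed.

Hypothesis unitA3 : A *m A *m A - A \in unitmx.

Let S := col_mx U (U *m A).

Lemma row_full_basis : row_full S.
Proof.
have US : (U <= S)%MS by rewrite /S -addsmxE addsmxSl.
have UAS : (U *m A <= S)%MS by rewrite /S -addsmxE addsmxSr.
have UAAS : (U *m A *m A <= S)%MS.
  by rewrite row_base_AA addmx_sub ?(mulmx_sub _ US) ?(mulmx_sub _ UAS).
have MU : (M <= U)%MS by rewrite eq_row_base submx_refl.
have A3S : (A *m A *m A - A <= S)%MS.
  rewrite cube_sub_eq addmx_sub ?eqmx_opp ?addmx_sub //.
  - exact: submx_trans MU US.
  - exact: submx_trans (mulmx_sub_row_base (A *m A)) US.
  - exact: submx_trans (submxMr A (mulmx_sub_row_base A)) UAS.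
  - exact: submx_trans (submxMr A (submxMr A MU)) UAAS.
  - exact: submx_trans (mulmx_sub_row_base (M *m A)) US.
by rewrite -sub1mx -(mulVmx unitA3) (submx_trans (submxMl _ _) A3S).
Qed.

Lemma rank_double : (\rank M + \rank M)%N = n.
Proof.
have := rank_sqr0 sqrM0; have := rank_leq_row S.
by move/eqP: row_full_basis => ->; lia.
Qed.

Lemma row_free_basis : row_free S.
Proof. by rewrite /row_free; move/eqP: row_full_basis => ->; rewrite rank_double. Qed.

Lemma basis_coef_eq0 : C *m C + B + Phi = 1%:M /\ C *m B + Psi = 0.
Proof.
have : row_mx (C *m B + Psi) (C *m C + B + Phi - 1%:M) *m S = 0 *m S.
  by rewrite mul0mx mul_row_col addrC row_base_cube_coef.
move/(row_free_inj row_free_basis)/eqP.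
by rewrite row_mx_eq0 subr_eq0 => /andP[/eqP-> /eqP->].
Qed.

Lemma C_cube : C *m C *m C = C.
Proof.
have [CCBPhi CBPsi] := basis_coef_eq0.
have BPhi : B + Phi = 1%:M - C *m C.
  by apply/eqP; rewrite eq_sym subr_eq addrC addrA CCBPhi.
apply/eqP; rewrite -subr_eq0 -opprB oppr_eq0 -{1}(mulmx1 C) -mulmxA -mulmxBr.
by rewrite -BPhi mulmxDr -Psi_eq CBPsi.
Qed.

Hypothesis n_gt0 : (0 < n)%N.

Lemma sqr0_perturbation_root :
  exists c : F, c0 - c1 * c2 - (1 + c1 + c2 ^+ 2) * c - 2 * c2 * c ^+ 2 = 0.
Proof.
have r_gt0 : (0 < \rank M)%N by have := rank_double; lia.
have [c /eigenvalueP[v vC nz_v]] := cube_id_eigenvalue r_gt0 C_cube.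
have [CCBPhi CBPsi] := basis_coef_eq0.
exists c; pose phi := 1 + c1 + c2 * c.
have vPhi : v *m Phi = phi *: v.
  have -> : Phi = (1 + c1)%:M + c2 *: C.
    by rewrite /C scalerA divff // scale1r [RHS]addrC subrK.
  by rewrite mulmxDr mul_mx_scalar -scalemxAr vC scalerA -scalerDl.
have vCC : v *m (C *m C) = (c ^+ 2) *: v.
  by rewrite mulmxA vC -scalemxAl vC scalerA expr2.
have vB : v *m B = (1 - c ^+ 2 - phi) *: v.
  have := congr1 (mulmx v) CCBPhi; rewrite !mulmxDr vCC vPhi mulmx1 => vCCBPhi.
  have vBE : v *m B + (c ^+ 2 *: v + phi *: v) = v by rewrite addrCA addrA.
  by apply/eqP; rewrite !scalerBl scale1r -addrA -opprD eq_sym subr_eq vBE.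
have PsiB : Psi = c0%:M + c2 *: B.
  by rewrite /B scalerA divff // scale1r [RHS]addrC subrK.
move: (congr1 (mulmx v) PsiB).
rewrite Psi_eq mulmxA vC -scalemxAl vPhi scalerA mulmxDr mul_mx_scalar.
rewrite -scalemxAr vB scalerA -scalerDl => /eqP; rewrite -subr_eq0 -scalerBl.
rewrite scalemx_eq0 (negPf nz_v) orbF => /eqP eq_phi.
by rewrite -oppr0 -eq_phi /phi; ring.
Qed.

End SquareZeroPerturbation.

Lemma monic_cubicE (R : nzRingType) (p : {poly R}) :
  p \is monic -> size p = 4 ->
  p = 'X^3 + p`_2 *: 'X^2 + p`_1 *: 'X + (p`_0)%:P.
Proof.
move=> /monicP p_monic p_size; apply/polyP => i.
rewrite !coefD !coefZ !coefXn coefX coefC.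
case: i => [|[|[|[|i]]]] /=; rewrite ?mulr0 ?mulr1 ?addr0 ?add0r //.
  by rewrite -p_monic lead_coefE p_size.
by rewrite nth_default // p_size.
Qed.

Lemma horner_monic_cubic (R : comNzRingType) (p : {poly R}) x :
  p \is monic -> size p = 4 ->
  p.[x] = x ^+ 3 + p`_2 * x ^+ 2 + p`_1 * x + p`_0.
Proof. by move=> p_monic p_size; rewrite {1}(monic_cubicE p_monic p_size) !hornerE. Qed.

Lemma irredp_no_root (F : fieldType) (p : {poly F}) x :
  (2 < size p)%N -> irreducible_poly p -> ~~ root p x.
Proof.
move=> p_size [_ irr_p]; apply/negP => /factor_theorem[q def_p].
have /irr_p : 'X - x%:P %| p by rewrite def_p dvdp_mull.
rewrite size_XsubC => /(_ isT) /eqp_size; rewrite size_XsubC => p_size2.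
by rewrite -p_size2 in p_size.
Qed.

Lemma cubic_mx_char_poly (F : fieldType) m (X : 'M[F]_m) (q : {poly F}) :
  char_poly X = q -> size q = 4 -> cubic_mx q`_2 q`_1 q`_0 X = 0.
Proof.
case: m X => [|m] X charX q_size; first exact: flatmx0.
have q_monic : q \is monic by rewrite -charX char_poly_monic.
have := Cayley_Hamilton X; rewrite charX {1}(monic_cubicE q_monic q_size).
rewrite -!mul_polyC !rmorphD !rmorphM /= !horner_mx_X !horner_mx_C => <-.
by rewrite /cubic_mx -!mulmxE !mul_scalar_mx mulmxA.
Qed.

Lemma companion_mxdiag_cubic (F : fieldType) (p : {poly F}) k
    (A : 'M[F]_(\sum_(i < k) (size p).-1)) :
  p \is monic -> size p = 4 ->
  similar_in unitmx A (\mxdiag_(i < k) companionmx p) ->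
  cubic_mx p`_2 p`_1 p`_0 A = 0.
Proof.
move=> p_monic p_size [Q Qu /(similarP Qu) QA].
rewrite -(mulKmx Qu (cubic_mx _ _ _ A)) (cubic_mx_similar _ _ _ QA).
rewrite cubic_mx_mxdiag ?mul0mx ?mulmx0 // => _.
exact: cubic_mx_char_poly (companionmxK p_monic) p_size.
Qed.

Lemma F3_cube (x : 'F_3) : x ^+ 3 = x.
Proof. by case: x => [[|[|[|//]]] ?]; apply/val_inj. Qed.

Lemma F3_diagonalizable_cube n (D : 'M['F_3]_n) :
  diagonalizable D -> D *m D *m D = D.
Proof.
have F3_root (x : 'F_3) : x ^+ 3 + 0 * x ^+ 2 + -1 * x + 0 = 0.
  by rewrite F3_cube mul0r mulN1r !addr0 subrr.
move/(diagonalizable_cubic_mx F3_root).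
by rewrite /cubic_mx scale0r scaleN1r raddf0 !addr0 => /eqP; rewrite subr_eq0 => /eqP.
Qed.

Lemma F3_no_common_root (c2 c1 c0 c : 'F_3) : c2 != 0 ->
  (forall x, x ^+ 3 + c2 * x ^+ 2 + c1 * x + c0 != 0) ->
  c0 - c1 * c2 - (1 + c1 + c2 ^+ 2) * c - 2 * c2 * c ^+ 2 != 0.
Proof.
move=> nz_c2 /[dup] /(_ 0) + /[dup] /(_ 1) + /(_ (-1)); move: nz_c2.
by case: c2 => [[|[|[|//]]] ?]; case: c1 => [[|[|[|//]]] ?];
   case: c0 => [[|[|[|//]]] ?]; case: c => [[|[|[|//]]] ?].
Qed.

Theorem proposition3p5 (p : {poly 'F_3}) (k : nat)
  (Hmonic : p \is monic) (Hirr : irreducible_poly p) (Hdeg : size p = 4%N)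
  (Htr : - p`_2 != 0) (Hk : (1 <= k)%N)
  (A : 'M['F_3]_(\sum_(i < k) (size p).-1))
  (HA : similar_in unitmx A (\mxdiag_(i < k) companionmx p)) :
  ~ exists M : 'M['F_3]_(\sum_(i < k) (size p).-1),
      M *m M = 0 /\ diagonalizable (A + M).
Proof.
move=> [M [sqrM0 /F3_diagonalizable_cube cubeD]].
have noroot x : x ^+ 3 + p`_2 * x ^+ 2 + p`_1 * x + p`_0 != 0.
  by rewrite -horner_monic_cubic // -/(root p x) irredp_no_root ?Hdeg.
have cubicA := companion_mxdiag_cubic Hmonic Hdeg HA.
have unitA3 := cubic_mx_cube_sub_unitmx cubicA noroot.
have n_gt0 : (0 < \sum_(i < k) (size p).-1)%N.
  by rewrite sum_nat_const card_ord Hdeg muln_gt0 Hk.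
have nz_p2 : p`_2 != 0 by rewrite -oppr_eq0.
have [c] := sqr0_perturbation_root sqrM0 cubeD cubicA nz_p2 unitA3 n_gt0.
by apply/eqP/F3_no_common_root.
Qed.
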